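(* Let $G$ be a non-amenable group with $G=H\times K$ for some groups $H,K$. Then $$\min\{\mathcal{T}(H),\mathcal{T}(K)\}\leq 2(\mathcal{T}(G)-1)^2.$$
   Context: A group $G$ admits a paradoxical decomposition if there exist positive integers $m,n$, pairwise disjoint subsets $P_1,\ldots,P_m,Q_1,\ldots,Q_n$ of $G$ and elements $g_1,\ldots,g_m,h_1,\ldots,h_n\in G$ such that $G=\bigcup_{i=1}^m P_ig_i=\bigcup_{j=1}^n Q_jh_j$; this happens if and only if $G$ is non-amenable. For a non-amenable group $G$, the Tarski number $\mathcal{T}(G)$ is the minimal value of $m+n$ over all paradoxical decompositions of $G$; for an amenable group the Tarski number is taken to be $\infty$. *)

From Stdlib Require Import Arith Lia ClassicalEpsilon.

Record group : Type := Group {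
  carrier :> Type;
  gmul : carrier -> carrier -> carrier;
  gone : carrier;
  ginv : carrier -> carrier;
  gmulA : forall x y z, gmul x (gmul y z) = gmul (gmul x y) z;
  gmul1 : forall x, gmul gone x = x;
  gmulV : forall x, gmul (ginv x) x = gone
}.

Definition prod_group (H K : group) : group.
Proof.
refine (@Group (carrier H * carrier K)
  (fun a b => (gmul H (fst a) (fst b), gmul K (snd a) (snd b)))
  (gone H, gone K)
  (fun a => (ginv H (fst a), ginv K (snd a))) _ _ _).
- intros [x1 x2] [y1 y2] [z1 z2]; simpl; now rewrite !gmulA.
- intros [x1 x2]; simpl; now rewrite !gmul1.
- intros [x1 x2]; simpl; now rewrite !gmulV.
Defined.

(* Paradoxical decomposition with m pieces P_1..P_m and n pieces Q_1..Q_n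
   (indexed by 0..m-1 and 0..n-1), all pairwise disjoint, and
   G = U_i P_i g_i = U_j Q_j h_j (right translates). *)
Definition paradoxical (G : group) (m n : nat) : Prop :=
  0 < m /\ 0 < n /\
  exists (P Q : nat -> G -> Prop) (g h : nat -> G),
    (forall i j x, i < m -> j < m -> i <> j -> P i x -> P j x -> False) /\
    (forall i j x, i < n -> j < n -> i <> j -> Q i x -> Q j x -> False) /\
    (forall i j x, i < m -> j < n -> P i x -> Q j x -> False) /\
    (forall x : G, exists i y, i < m /\ P i y /\ x = gmul G y (g i)) /\
    (forall x : G, exists j y, j < n /\ Q j y /\ x = gmul G y (h j)).

(* Non-amenability, via Tarski's theorem: existence of a paradoxical decomposition. *)
Definition nonamenable (G : group) : Prop := exists m n, paradoxical G m n.

Definition paradox_size (G : group) (t : nat) : Prop :=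
  exists m n, m + n = t /\ paradoxical G m n.

Definition is_tarski (G : group) (t : nat) : Prop :=
  paradox_size G t /\ forall t', paradox_size G t' -> t <= t'.

(* Tarski number in N u {oo}: None stands for oo (amenable case). *)
Definition tarski (G : group) : option nat :=
  match excluded_middle_informative (exists t, is_tarski G t) with
  | left e => Some (proj1_sig (constructive_indefinite_description _ e))
  | right _ => None
  end.

Definition ole (a b : option nat) : Prop :=
  match a, b with
  | _, None => True
  | None, Some _ => False
  | Some x, Some y => x <= y
  end.

Definition omin (a b : option nat) : option nat :=
  match a, b with
  | None, b => b
  | a, None => a
  | Some x, Some y => Some (Nat.min x y)
  end.

From Stdlib Require Import ClassicalEpsilon.
From HB Require Import structures.
From mathcomp Require Import all_boot boolp finmap zify.
Set Implicit Arguments. Unset Strict Implicit. Unset Printing Implicit Defensive.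
Local Open Scope fset_scope.

(* A paradoxical decomposition with m + n pieces gives a set S of at most
   m + n - 1 elements with |B S| >= 2 |B| for every finite B: translating the
   pieces back yields two injections of B into B S with disjoint images.
   Conversely, a doubling set D gives a paradoxical decomposition with 2 |D|
   pieces: Hall's marriage theorem, applied greedily on each left coset of the
   (countable) subgroup generated by D, matches every (x, b) with b : bool to
   some x d with d in D, injectively.  For S in H x K with projections X and Y,
   doubling of S gives 2 |B| |C| <= |B X| |C Y| for all finite B and C;
   applying this to B, B X and C, C Y shows that X X or Y Y is doubling, and
   it has at most |S|^2 <= (T(G) - 1)^2 elements. *)

Lemma card_fsetM (T1 T2 : choiceType) (A : {fset T1}) (B : {fset T2}) :
  #|` A `*` B| = (#|` A| * #|` B|)%N.
Proof.
rewrite card_fset_sum1 /fsetM big_imfset2 /=; last by move=> [? ?] [? ?] _ _ [-> ->].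
rewrite (card_fset_sum1 A) (card_fset_sum1 B) big_distrl /=.
by apply: eq_bigr => i _; rewrite mul1n.
Qed.

Lemma uniq_map_inj_in (A B : eqType) (f : A -> B) (s : seq A) :
  uniq (map f s) -> {in s &, injective f}.
Proof.
elim: s => [//|x s IH] /= /andP [fx_s uniq_s] a b.
rewrite !inE => /orP [/eqP ->|a_s] /orP [/eqP ->|b_s] // e.
- by move: fx_s; rewrite e map_f.
- by move: fx_s; rewrite -e map_f.
- exact: IH.
Qed.

Section GroupTheory.
Variable G : group.

(* [{classic _}] provides the choice structure needed for [{fset elt}]. *)
Definition elt := {classic (carrier G)}.
Definition mul (x y : elt) : elt := gmul G x y.
Definition inv (x : elt) : elt := ginv G x.
Definition one : elt := gone G.

Lemma mulA x y z : mul x (mul y z) = mul (mul x y) z. Proof. exact: gmulA. Qed.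
Lemma mul1 x : mul one x = x. Proof. exact: gmul1. Qed.
Lemma mulV x : mul (inv x) x = one. Proof. exact: gmulV. Qed.

Lemma mulrV x : mul x (inv x) = one.
Proof.
have e : mul (mul (inv (inv x)) (inv x)) (mul x (inv x)) = mul x (inv x).
  by rewrite mulV mul1.
by rewrite -e -mulA (mulA (inv x) x) mulV mul1 mulV.
Qed.

Lemma mulr1 x : mul x one = x. Proof. by rewrite -(mulV x) mulA mulrV mul1. Qed.
Lemma mulK x y : mul (mul x y) (inv y) = x. Proof. by rewrite -mulA mulrV mulr1. Qed.

Lemma mulI x : injective (mul x).
Proof. by move=> y z e; rewrite -(mul1 y) -(mul1 z) -(mulV x) -!mulA e. Qed.

Lemma mulIr x : injective (mul^~ x).
Proof. by move=> y z e; rewrite -(mulK y x) -(mulK z x) e. Qed.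

Lemma invK x : inv (inv x) = x.
Proof. by apply: (@mulIr (inv x)); rewrite mulV mulrV. Qed.

Lemma invM x y : inv (mul x y) = mul (inv y) (inv x).
Proof. by apply: (@mulI (mul x y)); rewrite mulrV mulA mulK mulrV. Qed.

Lemma inv1 : inv one = one.
Proof. by rewrite -[RHS](mulV one) mulr1. Qed.

Lemma mul_eq_inv x y a b : mul x a = mul y b -> mul (inv x) y = mul a (inv b).
Proof. by move=> e; rewrite -[y](mulK y b) -e !mulA mulV mul1. Qed.

Definition prodset (A B : {fset elt}) : {fset elt} := [fset mul a b | a in A, b in B].

Lemma prodsetP A B y :
  reflect (exists2 a, a \in A & exists2 b, b \in B & y = mul a b) (y \in prodset A B).
Proof. exact: imfset2P. Qed.

Lemma mem_prodset A B a b : a \in A -> b \in B -> mul a b \in prodset A B.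
Proof. exact: in_imfset2. Qed.

Lemma card_prodset A B : #|` prodset A B| <= #|` A| * #|` B|.
Proof.
have sub : prodset A B `<=` [fset mul p.1 p.2 | p in A `*` B].
  apply/fsubsetP => _ /prodsetP [a aA [b bB ->]].
  by apply/imfsetP; exists (a, b); rewrite //= in_fsetM aA bB.
rewrite -card_fsetM; apply: leq_trans (fsubset_leq_card sub) _.
exact: leq_imfset_card.
Qed.

Lemma prodsetA_sub A B C : prodset (prodset A B) C `<=` prodset A (prodset B C).
Proof.
apply/fsubsetP => _ /prodsetP [_ /prodsetP [a aA [b bB ->]] [c cC ->]].
by rewrite -mulA !mem_prodset.
Qed.

Definition doubling (S : {fset elt}) := forall B : {fset elt}, 2 * #|` B| <= #|` prodset B S|.

End GroupTheory.

Section InfiniteHall.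
Variables (L R : choiceType) (nb : L -> {fset R}).

Definition nbs (F : {fset L}) : {fset R} := \bigcup_(v <- F) nb v.

Lemma nbsP F y : reflect (exists2 v, v \in F & y \in nb v) (y \in nbs F).
Proof.
apply: (iffP (bigfcupP _ _ _ _)) => [[v /andP [vF _] yv]|[v vF yv]]; exists v => //.
by rewrite vF.
Qed.

Lemma nbsS F1 F2 : F1 `<=` F2 -> nbs F1 `<=` nbs F2.
Proof.
move=> /fsubsetP sF; apply/fsubsetP => y /nbsP [v /sF vF yv].
by apply/nbsP; exists v.
Qed.

Lemma nbs0 : nbs fset0 = fset0.
Proof. by apply/fsetP => y; rewrite inE; apply/nbsP => -[v]; rewrite inE. Qed.

Lemma nbsU F1 F2 : nbs (F1 `|` F2) = nbs F1 `|` nbs F2.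
Proof.
apply/fsetP => y; rewrite inE; apply/nbsP/orP.
  by move=> [v]; rewrite inE => /orP [] vF yv; [left|right]; apply/nbsP; exists v.
by move=> [] /nbsP [v vF yv]; exists v; rewrite // inE vF ?orbT.
Qed.

Lemma nbs1 v : nbs [fset v] = nb v.
Proof.
apply/fsetP => y; apply/nbsP/idP => [[w]|yv]; last by exists v; rewrite ?inE.
by rewrite inE => /eqP ->.
Qed.

(* [hall M U]: Hall's condition for the vertices outside [M] once the
   vertices of [U] have been used up. *)
Definition hall (M : {fset L}) (U : {fset R}) :=
  forall F : {fset L}, [disjoint F & M] -> #|` F| <= #|` nbs F `\` U|.

Section Augment.
Variables (M : {fset L}) (U : {fset R}).
Hypothesis hallMU : hall M U.

Let tight F := #|` nbs F `\` U| = #|` F|.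

Lemma tightU F1 F2 : [disjoint F1 & M] -> [disjoint F2 & M] ->
  tight F1 -> tight F2 -> tight (F1 `|` F2).
Proof.
move=> dis1 dis2 tight1 tight2.
have submod : #|` nbs (F1 `|` F2) `\` U| + #|` nbs (F1 `&` F2) `\` U|
    <= #|` nbs F1 `\` U| + #|` nbs F2 `\` U|.
  rewrite nbsU fsetDUl -[X in _ <= X]cardfsUI leq_add2l; apply: fsubset_leq_card.
  by rewrite fsubsetI !fsetSD ?nbsS ?fsubsetIl ?fsubsetIr.
have hallU : #|` F1 `|` F2| <= #|` nbs (F1 `|` F2) `\` U|.
  by apply: hallMU; rewrite fdisjointUX dis1 dis2.
have hallI : #|` F1 `&` F2| <= #|` nbs (F1 `&` F2) `\` U|.
  by apply: hallMU; apply: fdisjointWl dis1; apply: fsubsetIl.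
have := cardfsUI F1 F2; rewrite /tight in tight1 tight2 *; lia.
Qed.

Lemma hall_violation_tight y F : y \notin U -> [disjoint F & M] ->
  #|` nbs F `\` (y |` U)| < #|` F| -> tight F /\ y \in nbs F.
Proof.
move=> yU disF lt_F.
have le_F := hallMU disF.
have sub : nbs F `\` U `<=` y |` (nbs F `\` (y |` U)).
  by apply/fsubsetP => x; rewrite !inE; case: (x == y).
have := leq_trans (fsubset_leq_card sub) (leq_card_fsetU _ _).1.
rewrite cardfs1 add1n => le_S.
split; first by apply/eqP; rewrite eqn_leq le_F andbT; rewrite -ltnS; apply: leq_trans le_S _.
apply: contraLR lt_F => ynF; rewrite -leqNgt; apply: leq_trans le_F _.
apply: fsubset_leq_card; apply/fsubsetP => x /fsetDP [xF xU].
by rewrite in_fsetD in_fset1U negb_or xU xF !andbT; apply: contraNneq ynF => <-.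
Qed.

Lemma tight_cover v (s : seq R) :
  (forall y, y \in s -> exists2 F, [disjoint F & v |` M] & #|` nbs F `\` (y |` U)| < #|` F|) ->
  {subset s <= nb v `\` U} ->
  exists F, [/\ [disjoint F & v |` M], tight F & {subset s <= nbs F}].
Proof.
have disW F : [disjoint F & v |` M] -> [disjoint F & M].
  by apply: fdisjointWr; apply: fsubsetU1.
elim: s => [|y s IH] blocked sub.
  by exists fset0; rewrite fdisjoint0X /tight nbs0 fset0D cardfs0.
have tail x : x \in s -> x \in y :: s by move=> xs; rewrite inE xs orbT.
have [F [disF tightF coverF]] :=
  IH (fun x xs => blocked x (tail x xs)) (fun x xs => sub x (tail x xs)).
have /fsetDP [_ yU] := sub y (mem_head y s).
have [F' disF' viol] := blocked y (mem_head y s).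
have [tightF' yF'] := hall_violation_tight yU (disW _ disF') viol.
exists (F `|` F'); split.
- by rewrite fdisjointUX disF disF'.
- exact: tightU (disW _ disF) (disW _ disF') tightF tightF'.
- move=> x; rewrite inE => /orP [/eqP ->|xs]; rewrite nbsU inE ?yF' ?orbT //.
  by rewrite coverF.
Qed.

(* If no neighbour of [v] can be used, every candidate [y] is blocked by a tight
   set whose neighbourhood contains [y]; the union of these sets with [v]
   violates [hall M U]. *)
Lemma hall_augment v : v \notin M ->
  exists2 y, y \in nb v `\` U & hall (v |` M) (y |` U).
Proof.
move=> vM; apply: contrapT => no_aug.
have blocked y : y \in nb v `\` U -> exists2 F,
    [disjoint F & v |` M] & #|` nbs F `\` (y |` U)| < #|` F|.
  move=> yv; apply: contra_notP no_aug => not_blocked; exists y => // F' disF'.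
  by rewrite leqNgt; apply/negP => viol; apply: not_blocked; exists F'.
have [F [disF tightF cover]] := tight_cover blocked (fun y yv => yv).
have vF : v \notin F.
  by move/fdisjointP: disF => /(_ v) disv; exact: contraL disv (fset1U1 v M).
have disvF : [disjoint v |` F & M].
  by rewrite fdisjointU1X vM; apply: fdisjointWr disF; apply: fsubsetU1.
move: (hallMU disvF); rewrite cardfsU1 vF nbsU nbs1 fsetDUl.
have -> : nb v `\` U `|` nbs F `\` U = nbs F `\` U.
  by apply/fsetUidPr/fsubsetP => y yv; rewrite !inE (cover y yv) andbT; case/fsetDP: yv => _ ->.
by rewrite tightF add1n ltnn.
Qed.

End Augment.

(* Keeping Hall's condition for the unmatched part in the invariant is what
   lets a partial matching be extended greedily, one vertex at a time. *)
Definition matching (s : seq (L * R)) :=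
  [/\ {in s, forall p, p.2 \in nb p.1}, uniq (map snd s)
    & hall [fset x in map fst s] [fset y in map snd s]].

Lemma matching_cons s v : matching s -> v \notin map fst s ->
  exists y, matching ((v, y) :: s).
Proof.
move=> [edges uniq_s hall_s] vs.
have vM : v \notin [fset x in map fst s] by rewrite inE.
have [y /fsetDP [yv ys] hall_vy] := hall_augment hall_s vM.
exists y; split => /=.
- by move=> p; rewrite inE => /orP [/eqP ->|]; [exact: yv | exact: edges].
- by move: ys; rewrite inE => ->.
- have -> : [fset x in v :: map fst s] = v |` [fset x in map fst s].
    by apply/fsetP => x; rewrite !inE.
  by have -> : [fset z in y :: map snd s] = y |` [fset z in map snd s]
    by apply/fsetP => z; rewrite !inE.
Qed.

Lemma matching_grow s (W : seq L) : matching s ->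
  exists s', matching (s' ++ s) /\ {subset W <= map fst (s' ++ s)}.
Proof.
elim: W s => [|w W IH] s match_s; first by exists [::].
have [s1 [match1 w_s1]] : exists s1, matching (s1 ++ s) /\ w \in map fst (s1 ++ s).
  have [ws|wns] := boolP (w \in map fst s); first by exists [::].
  have [y match_y] := matching_cons match_s wns.
  by exists [:: (w, y)]; rewrite /= inE eqxx.
have [s2 [match2 W_s2]] := IH _ match1.
exists (s2 ++ s1); rewrite -catA; split => // x; rewrite inE => /orP [/eqP ->|]; last exact: W_s2.
by rewrite map_cat mem_cat w_s1 orbT.
Qed.

Fixpoint chain (grow : nat -> seq (L * R) -> seq (L * R)) r :=
  if r is r'.+1 then grow r' (chain grow r') ++ chain grow r' else [::].

Section Exhaustion.
Hypothesis hall0 : hall fset0 fset0.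

Lemma nb_nonempty v : exists y, y \in nb v.
Proof.
have := hall0 (F := [fset v]); rewrite fdisjointX0 cardfs1 nbs1 fsetD0 => /(_ isT).
by rewrite cardfs_gt0 => /fset0Pn.
Qed.

Lemma matching_nil : matching [::].
Proof.
split => //; have -> : [fset x in [::] : seq L] = fset0 by apply/fsetP => x; rewrite !inE.
by have -> : [fset y in [::] : seq R] = fset0 by apply/fsetP => y; rewrite !inE.
Qed.

Section Chain.
Variables (ex : nat -> {fset L}) (grow : nat -> seq (L * R) -> seq (L * R)).
Hypothesis growP : forall r s, matching s ->
  matching (grow r s ++ s) /\ {subset ex r <= map fst (grow r s ++ s)}.

Lemma chain_matching r : matching (chain grow r).
Proof. by elim: r => [|r IH] /=; [exact: matching_nil | case: (growP r IH)]. Qed.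

Lemma chain_subset r r' : r <= r' -> {subset chain grow r <= chain grow r'}.
Proof.
move=> /subnKC <-; elim: (r' - r) => [|k IH] p; rewrite ?addn0 // addnS /= mem_cat.
by move=> /IH ->; rewrite orbT.
Qed.

Lemma chain_cover r v : v \in ex r -> v \in map fst (chain grow r.+1).
Proof. by case: (growP r (chain_matching r)) => _; apply. Qed.

End Chain.

Lemma matching_exhaustion (ex : nat -> {fset L}) : exists f : L -> R,
  (forall v, f v \in nb v) /\
  (forall v w r1 r2, v \in ex r1 -> w \in ex r2 -> f v = f w -> v = w).
Proof.
have /choice [grow0 growP0] : forall rs : nat * seq (L * R), exists s', matching rs.2 ->
    matching (s' ++ rs.2) /\ {subset ex rs.1 <= map fst (s' ++ rs.2)}.
  move=> [r s]; case: (pselect (matching s)) => [match_s|]; last by exists [::].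
  by have [s' ?] := matching_grow (ex r) match_s; exists s'.
pose grow r s := grow0 (r, s).
have growP r s : matching s ->
    matching (grow r s ++ s) /\ {subset ex r <= map fst (grow r s ++ s)} := growP0 (r, s).
have /choice [f fP] : forall v, exists y, y \in nb v /\
    ((exists r, v \in ex r) -> exists r', (v, y) \in chain grow r').
  move=> v; have [[r vr]|nvr] := pselect (exists r, v \in ex r); last first.
    by have [y yv] := nb_nonempty v; exists y; split.
  have /mapP [[v' y] vy /= ev] := chain_cover growP vr; subst v'.
  have [edges _ _] := chain_matching growP r.+1.
  by exists y; split => [|_]; [exact: edges _ vy | exists r.+1].
exists f; split => [v|v w r1 r2 vr1 wr2 fvw]; first by case: (fP v).
have [r1' v_chain] := (fP v).2 (ex_intro _ r1 vr1).
have [r2' w_chain] := (fP w).2 (ex_intro _ r2 wr2).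
have [_ uniq_s _] := chain_matching growP (maxn r1' r2').
have := uniq_map_inj_in uniq_s (chain_subset (leq_maxl r1' r2') v_chain).
by rewrite fvw => /(_ _ (chain_subset (leq_maxr r1' r2') w_chain) erefl) [].
Qed.

Theorem hall_blocks (C : Type) (cls : L -> C) (ex : C -> nat -> {fset L}) :
  (forall v, exists r, v \in ex (cls v) r) ->
  (forall v w y, y \in nb v -> y \in nb w -> cls v = cls w) ->
  exists f : L -> R, (forall v, f v \in nb v) /\ injective f.
Proof.
move=> exhausted blocks.
have /choice [fc fcP] : forall c, exists fc : L -> R, (forall v, fc v \in nb v) /\
    forall v w r1 r2, v \in ex c r1 -> w \in ex c r2 -> fc v = fc w -> v = w.
  by move=> c; apply: matching_exhaustion.
exists (fun v => fc (cls v) v); split => [v|v w fvw]; first by case: (fcP (cls v)).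
have cvw : cls v = cls w.
  apply: (blocks v w (fc (cls v) v)); first by case: (fcP (cls v)).
  by rewrite fvw; case: (fcP (cls w)).
have [r1 vr1] := exhausted v; have [r2 wr2] := exhausted w.
by rewrite cvw in vr1 fvw; apply: (fcP (cls w)).2 vr1 wr2 fvw.
Qed.

End Exhaustion.
End InfiniteHall.

Section DoublingParadoxical.
Variables (G : group) (D : {fset elt G}).

Definition translD (v : elt G * bool) : {fset elt G} := [fset mul v.1 d | d in D].

Lemma doubling_hall : doubling D -> hall translD fset0 fset0.
Proof.
move=> dblD F _; rewrite fsetD0.
pose P := [fset v.1 | v in F].
have F_sub : F `<=` P `*` [fset true; false].
  apply/fsubsetP => -[x b] xbF; rewrite in_fsetM /=; apply/andP; split.
    by apply/imfsetP; exists (x, b).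
  by case: b {xbF}; rewrite !inE.
have PD_sub : prodset P D `<=` nbs translD F.
  apply/fsubsetP => _ /prodsetP [_ /imfsetP [v vF ->] [d dD ->]].
  by apply/nbsP; exists v => //; apply/imfsetP; exists d.
apply: leq_trans (fsubset_leq_card F_sub) _.
rewrite card_fsetM cardfs2 /= mulnC.
exact: leq_trans (dblD P) (fsubset_leq_card PD_sub).
Qed.

Definition gens : {fset elt G} := D `|` [fset inv d | d in D].

Fixpoint ball r : {fset elt G} :=
  if r is r'.+1 then ball r' `|` prodset (ball r') gens else [fset one G].

Lemma ballS r : ball r `<=` ball r.+1.
Proof. exact: fsubsetUl. Qed.

Lemma mem_ball_mul r x e : x \in ball r -> e \in gens -> mul x e \in ball r.+1.
Proof. by move=> xr eg; rewrite /= inE mem_prodset ?orbT. Qed.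

Lemma ball_gens e : e \in gens -> e \in ball 1.
Proof. by move=> eg; rewrite -[e]mul1; apply: mem_ball_mul eg; rewrite inE. Qed.

Lemma ball_mul r s x y : x \in ball r -> y \in ball s -> mul x y \in ball (r + s).
Proof.
move=> xr; elim: s y => [|s IH] y; first by rewrite inE addn0 => /eqP ->; rewrite mulr1.
rewrite addnS inE => /orP [ys|/prodsetP [u us [e eg ->]]].
  exact: fsubsetP (ballS _) _ (IH y ys).
by rewrite mulA; apply: mem_ball_mul => //; apply: IH.
Qed.

Lemma gens_inv e : e \in gens -> inv e \in gens.
Proof.
rewrite !inE => /orP [eD|/imfsetP [d dD ->]]; last by rewrite invK dD.
by apply/orP; right; apply/imfsetP; exists e.
Qed.

Lemma ball_inv r x : x \in ball r -> inv x \in ball r.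
Proof.
elim: r x => [|r IH] x; first by rewrite !inE => /eqP ->; rewrite inv1.
rewrite inE => /orP [xr|/prodsetP [u ur [e eg ->]]].
  exact: fsubsetP (ballS _) _ (IH x xr).
by rewrite invM -add1n; apply: ball_mul; [apply: ball_gens; apply: gens_inv | apply: IH].
Qed.

(* [linked x y] iff [x] and [y] lie in the same left coset of the subgroup
   generated by [D]; these cosets are the blocks of the matching problem. *)
Definition linked (x y : elt G) := exists r, mul (inv x) y \in ball r.

Lemma linked_refl x : linked x x.
Proof. by exists 0; rewrite mulV inE. Qed.

Lemma linked_sym x y : linked x y -> linked y x.
Proof. by move=> [r xy]; exists r; rewrite -[x]invK -invM ball_inv. Qed.

Lemma linked_trans x y z : linked x y -> linked y z -> linked x z.
Proof.
move=> [r xy] [s yz]; exists (r + s)%N.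
have -> : mul (inv x) z = mul (mul (inv x) y) (mul (inv y) z) by rewrite mulA mulK.
exact: ball_mul.
Qed.

Definition rep (x : elt G) : elt G := epsilon (inhabits (one G)) (linked x).

Lemma rep_linked x : linked (rep x) x.
Proof.
apply/linked_sym/(epsilon_spec (inhabits (one G)) (linked x)).
by exists x; apply: linked_refl.
Qed.

Lemma rep_eq x y : linked x y -> rep x = rep y.
Proof.
move=> xy; rewrite /rep; congr epsilon; apply: funext => z.
apply: propext; split; first exact: linked_trans (linked_sym xy).
exact: linked_trans xy.
Qed.

Lemma doubling_matching : doubling D ->
  exists psi : elt G * bool -> elt G, (forall v, psi v \in translD v) /\ injective psi.
Proof.
move=> dblD; apply: (hall_blocks (doubling_hall dblD) (cls := fun v => rep v.1)
  (ex := fun c r => [fset mul c b | b in ball r] `*` [fset true; false])).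
- move=> [x b]; have [r xr] := rep_linked x; exists r; rewrite in_fsetM /=.
  apply/andP; split; last by case: b; rewrite !inE.
  by apply/imfsetP; exists (mul (inv (rep x)) x) => //; rewrite mulA mulrV mul1.
- move=> v w _ /imfsetP [d dD ->] /imfsetP [d' d'D /mul_eq_inv vw].
  apply: rep_eq; exists 2; rewrite vw.
  by apply: (@ball_mul 1 1); apply: ball_gens; rewrite ?gens_inv // inE ?dD ?d'D.
Qed.

Lemma matching_paradoxical (psi : elt G * bool -> elt G) :
  (forall v, psi v \in translD v) -> injective psi -> paradoxical G #|` D| #|` D|.
Proof.
move=> psiD psi_inj.
pose d_ i := nth (one G) D i.
pose piece b i y := exists x, psi (x, b) = y /\ y = mul x (d_ i).
have D_pos : (0 < #|` D|)%coq_nat.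
  have /imfsetP [d dD _] := psiD (one G, true).
  by apply/ltP; rewrite cardfs_gt0; apply/fset0Pn; exists d.
have piece_disj b i j y : (i < #|` D|)%coq_nat -> (j < #|` D|)%coq_nat -> i <> j ->
    piece b i y -> piece b j y -> False.
  move=> /ltP iD /ltP jD neq_ij [x [<- ex]] [x' [/psi_inj [->] ex']]; apply: neq_ij.
  apply/eqP; rewrite -(nth_uniq (one G) iD jD (fset_uniq D)); apply/eqP.
  by apply: (@mulI _ x); rewrite -ex ex'.
have piece_cover b x : exists i y, (i < #|` D|)%coq_nat /\ piece b i y /\
    x = gmul G y (inv (d_ i)).
  have /imfsetP [d dD /= psi_x] := psiD (x, b).
  exists (index d D); exists (psi (x, b)); split; first by apply/ltP; rewrite index_mem.
  have d_d : d_ (index d D) = d by rewrite /d_ nth_index.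
  split; first by exists x; rewrite d_d.
  by rewrite d_d psi_x -/(mul _ _) mulK.
do 2!split => //; exists (piece true), (piece false), (fun i => inv (d_ i)), (fun i => inv (d_ i)).
split; first exact: piece_disj.
split; first exact: piece_disj.
split; last by split; exact: piece_cover.
by move=> i j y _ _ [x [<- _]] [x' [/psi_inj]].
Qed.

Lemma doubling_paradoxical : doubling D -> paradoxical G #|` D| #|` D|.
Proof. by move=> /doubling_matching [psi [psiD /(matching_paradoxical psiD)]]. Qed.

End DoublingParadoxical.

Section ParadoxicalDoubling.
Variable G : group.

Lemma piece_map m (P : nat -> elt G -> Prop) (g : nat -> elt G) :
  (forall i j x, (i < m)%coq_nat -> (j < m)%coq_nat -> i <> j -> P i x -> P j x -> False) ->
  (forall x : G, exists i y, (i < m)%coq_nat /\ P i y /\ x = gmul G y (g i)) ->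
  exists f : elt G -> elt G, injective f /\
    forall x, exists i, [/\ (i < m)%coq_nat, P i (f x) & f x = mul x (inv (g i))].
Proof.
move=> disjP coverP.
have /choice [p pP] : forall x : elt G, exists p : nat * elt G,
    [/\ (p.1 < m)%coq_nat, P p.1 p.2 & x = mul p.2 (g p.1)].
  by move=> x; have [i [y [? [? ?]]]] := coverP x; exists (i, y).
have f_spec x : [/\ ((p x).1 < m)%coq_nat, P (p x).1 (p x).2 & (p x).2 = mul x (inv (g (p x).1))].
  by case: (pP x) => ? ? ex; split => //; rewrite {2}ex mulK.
exists (fun x => (p x).2); split => [x x' e|x]; last by exists (p x).1.
have [im Pi _] := f_spec x; have [im' Pi' _] := f_spec x'.
have ei : (p x).1 = (p x').1.
  by apply: contrapT => ne; apply: disjP im im' ne Pi _; rewrite e.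
by case: (pP x) (pP x') => _ _ -> [_ _ ->]; rewrite e ei.
Qed.

Lemma injections_doubling (S : {fset elt G}) (f1 f2 : elt G -> elt G) :
  injective f1 -> injective f2 -> (forall x y, f1 x <> f2 y) ->
  (forall x, exists2 s, s \in S & f1 x = mul x s) ->
  (forall x, exists2 s, s \in S & f2 x = mul x s) -> doubling S.
Proof.
move=> inj1 inj2 disj12 f1S f2S B.
have sub : f1 @` B `|` f2 @` B `<=` prodset B S.
  apply/fsubsetP => _ /fsetUP [] /imfsetP [x xB ->].
    by have [s sS ->] := f1S x; apply: mem_prodset.
  by have [s sS ->] := f2S x; apply: mem_prodset.
have disj : f1 @` B `&` f2 @` B = fset0.
  apply/fsetP => y; rewrite !inE; apply/negP => /andP [/imfsetP [x _ ->] /imfsetP [x' _]].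
  exact: disj12.
have card1 : #|` f1 @` B| = #|` B| by apply: card_imfset.
have card2 : #|` f2 @` B| = #|` B| by apply: card_imfset.
have := cardfsUI (f1 @` B) (f2 @` B); rewrite disj cardfs0 addn0 card1 card2 => e.
by rewrite mul2n -addnn -e; apply: fsubset_leq_card.
Qed.

Lemma paradoxical_doubling m n : paradoxical G m n ->
  exists S : {fset elt G}, #|` S| <= m + n - 1 /\ doubling S.
Proof.
move=> [m_pos [n_pos [P [Q [g [h [disjP [disjQ [disjPQ [coverP coverQ]]]]]]]]]].
have [fP [fP_inj fP_spec]] := piece_map disjP coverP.
have [fQ [fQ_inj fQ_spec]] := piece_map disjQ coverQ.
pose SP := [fset x in [seq mul (g 0) (inv (g i)) | i <- iota 0 m]].
pose SQ := [fset x in [seq mul (h 0) (inv (h j)) | j <- iota 0 n]].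
exists (SP `|` SQ); split.
  (* Both families of translates contain [one], whence the bound m + n - 1. *)
  have one_SPQ : one G \in SP `&` SQ.
    by rewrite !inE; apply/andP; split; apply/mapP; exists 0; rewrite ?mulrV // mem_iota;
      [move/ltP: m_pos | move/ltP: n_pos].
  have := cardfsUI SP SQ.
  have SP_le : #|` SP| <= m.
    by rewrite card_fseq; apply: leq_trans (size_undup _) _; rewrite size_map size_iota.
  have SQ_le : #|` SQ| <= n.
    by rewrite card_fseq; apply: leq_trans (size_undup _) _; rewrite size_map size_iota.
  have : 0 < #|` SP `&` SQ| by rewrite cardfs_gt0; apply/fset0Pn; exists (one G).
  lia.
apply: (@injections_doubling _ (fun x => fP (mul x (g 0))) (fun x => fQ (mul x (h 0)))).
- by move=> x x' /fP_inj /mulIr.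
- by move=> x x' /fQ_inj /mulIr.
- move=> x x' e.
  have [i [im Pi _]] := fP_spec (mul x (g 0)); have [j [jn Qj _]] := fQ_spec (mul x' (h 0)).
  by apply: (disjPQ i j _ im jn Pi); rewrite e.
- move=> x; have [i [im _ ->]] := fP_spec (mul x (g 0)).
  exists (mul (g 0) (inv (g i))); rewrite -?mulA // in_fsetU inE.
  by apply/orP; left; apply/mapP; exists i; rewrite // mem_iota; apply/ltP.
- move=> x; have [j [jn _ ->]] := fQ_spec (mul x (h 0)).
  exists (mul (h 0) (inv (h j))); rewrite -?mulA // in_fsetU orbC inE.
  by apply/orP; left; apply/mapP; exists j; rewrite // mem_iota; apply/ltP.
Qed.

End ParadoxicalDoubling.

Lemma product_doubling_absurd b0 b1 b2 c0 c1 c2 : 0 < b0 -> 0 < c0 ->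
  2 * b0 * c0 <= b1 * c1 -> 2 * b0 * c1 <= b1 * c2 ->
  2 * b1 * c0 <= b2 * c1 -> 2 * b1 * c1 <= b2 * c2 ->
  b2 < 2 * b0 -> c2 < 2 * c0 -> False.
Proof.
(* The product of the four inequalities is 16 (b0 b1 c0 c1)^2 <= (b1 b2 c1 c2)^2,
   while b2 c2 < 4 b0 c0. *)
move=> b0_pos c0_pos le00 le01 le10 le11 lt_b lt_c.
have b1c1_pos : 0 < b1 * c1 by apply: leq_trans le00; rewrite -mulnA !muln_gt0 b0_pos c0_pos.
have prod_le : 16 * (b0 * b1 * c0 * c1) ^ 2 <= (b1 * b2 * c1 * c2) ^ 2.
  have := leq_mul (leq_mul le00 le01) (leq_mul le10 le11).
  by congr (_ <= _); lia.
have prod_lt : b1 * b2 * c1 * c2 < 4 * (b0 * b1 * c0 * c1).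
  have := ltn_mul lt_b lt_c; rewrite -(ltn_pmul2l b1c1_pos).
  by congr (_ < _); lia.
by move: prod_lt; rewrite -ltn_sqr [X in _ < X]expnMn => /(leq_ltn_trans prod_le); rewrite ltnn.
Qed.

Section DirectProduct.
Variables H K : group.

Definition pairG (p : elt H * elt K) : elt (prod_group H K) := p.
Definition fstG (p : elt (prod_group H K)) : elt H := (p : carrier H * carrier K).1.
Definition sndG (p : elt (prod_group H K)) : elt K := (p : carrier H * carrier K).2.

Lemma doubling_prod_card (S : {fset elt (prod_group H K)}) : doubling S ->
  forall (B : {fset elt H}) (C : {fset elt K}),
  2 * (#|` B| * #|` C|) <= #|` prodset B (fstG @` S)| * #|` prodset C (sndG @` S)|.
Proof.
move=> dblS B C.
have pairG_inj : injective pairG by [].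
have sub : prodset (pairG @` (B `*` C)) S
    `<=` pairG @` (prodset B (fstG @` S) `*` prodset C (sndG @` S)).
  apply/fsubsetP => _ /prodsetP [_ /imfsetP [[b c] bc ->] [s sS ->]].
  apply/imfsetP; exists (mul b (fstG s), mul c (sndG s)) => //.
  move: bc; rewrite !in_fsetM /= => /andP [bB cC].
  by rewrite !mem_prodset //; apply/imfsetP; exists s.
have := dblS (pairG @` (B `*` C)); rewrite (card_imfset _ _ pairG_inj) card_fsetM => dbl.
apply: leq_trans dbl (leq_trans (fsubset_leq_card sub) _).
by rewrite (card_imfset _ _ pairG_inj) card_fsetM.
Qed.

End DirectProduct.

Lemma doubling_square_of_product (H K : group) (X : {fset elt H}) (Y : {fset elt K}) :
  (forall (B : {fset elt H}) (C : {fset elt K}),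
    2 * (#|` B| * #|` C|) <= #|` prodset B X| * #|` prodset C Y|) ->
  doubling (prodset X X) \/ doubling (prodset Y Y).
Proof.
move=> dblXY; apply: contrapT; rewrite /doubling => /not_orP [/existsNP [B ltB] /existsNP [C ltC]].
move/negP: ltB; move/negP: ltC; rewrite -!ltnNge => ltC ltB.
have ltB' := leq_ltn_trans (fsubset_leq_card (prodsetA_sub B X X)) ltB.
have ltC' := leq_ltn_trans (fsubset_leq_card (prodsetA_sub C Y Y)) ltC.
have B_pos : 0 < #|` B| by move: ltB; case: #|` B|.
have C_pos : 0 < #|` C| by move: ltC; case: #|` C|.
apply: (product_doubling_absurd B_pos C_pos _ _ _ _ ltB' ltC'); rewrite -mulnA; apply: dblXY.
Qed.

Lemma tarski_paradox_size (G : group) t : tarski G = Some t -> paradox_size G t.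
Proof.
rewrite /tarski; case: excluded_middle_informative => // e [<-].
by case: (ClassicalEpsilon.constructive_indefinite_description _ e) => s [].
Qed.

Lemma tarski_le_paradoxical (G : group) m n : paradoxical G m n ->
  exists t, tarski G = Some t /\ t <= m + n.
Proof.
move=> parad_mn.
have [u /asboolP size_u min_u] := ex_minnP (ex_intro (fun k => `[< paradox_size G k >]) (m + n)%N
  (asboolT (ex_intro _ m (ex_intro _ n (conj erefl parad_mn))))).
rewrite /tarski; case: excluded_middle_informative => [e|]; last first.
  by case; exists u; split => // t' /asboolP /min_u /leP.
case: (ClassicalEpsilon.constructive_indefinite_description _ e) => t [size_t min_t] /=.
by exists t; split => //; apply/leP; apply: min_t; exists m, n.
Qed.

Lemma tarski_le_doubling (G : group) (X : {fset elt G}) k :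
  doubling (prodset X X) -> #|` X| <= k -> exists t, tarski G = Some t /\ t <= 2 * k ^ 2.
Proof.
move=> /doubling_paradoxical parad_XX X_le.
have [t [tG t_le]] := tarski_le_paradoxical parad_XX.
exists t; split => //; apply: leq_trans t_le _; rewrite addnn -mul2n leq_mul2l /=.
by apply: leq_trans (card_prodset X X) _; rewrite -mulnn leq_mul.
Qed.

Theorem theorem1 (H K : group) :
  nonamenable (prod_group H K) ->
  forall t : nat, tarski (prod_group H K) = Some t ->
  ole (omin (tarski H) (tarski K)) (Some (Nat.mul 2 (Nat.pow (Nat.sub t 1) 2))).
Proof.
(* Non-amenability is already implied by [tarski _ = Some t]. *)
move=> _ t tHK.
have [m [n [<- parad_mn]]] := tarski_paradox_size tHK.
have [S [S_le dblS]] := paradoxical_doubling parad_mn.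
have X_le : #|` (@fstG H K) @` S| <= m + n - 1.
  by apply: leq_trans S_le; apply: leq_imfset_card.
have Y_le : #|` (@sndG H K) @` S| <= m + n - 1.
  by apply: leq_trans S_le; apply: leq_imfset_card.
have [/tarski_le_doubling /(_ X_le) [a [-> a_le]]|/tarski_le_doubling /(_ Y_le) [a [-> a_le]]] :=
  doubling_square_of_product (doubling_prod_card dblS).
  by case: (tarski K) => [b|] /=; lia.
by case: (tarski H) => [b|] /=; lia.
Qed.
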